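(* Consider the multi-agent setting described in the context, with parameters $\alpha>0$ and $F\in\mathbb Z_{\ge0}$. Assume: - the set $\mathcal A$ of misbehaving agents is $F$-local; - the digraph $\mathcal D$ is $(2F+1)$-robust. Let $x_{\mathcal N}:[0,t_1)\to\mathbb R^{|\mathcal N|}$ be a trajectory of the normal agents and let $V(x)=\max_k x_k-\min_k x_k$. Then the derivative $\frac{d}{dt}V(x_{\mathcal N}(t))$ exists at almost all $t\in[0,t_1)$. Furthermore, at almost all $t\in[0,t_1)$ with $x_{\mathcal N}(t)\notin\mathrm{span}(\mathbf 1)$, $$\frac{d}{dt}V(x_{\mathcal N}(t))\le-\alpha<0.$$
   Context: Setting. Let $\mathcal D=(\mathcal V,\mathcal E)$ be a digraph with $\mathcal V=\{1,\dots,n\}$ and $n\ge2$. An edge $(i,j)\in\mathcal E$ means that agent $j$ receives information from agent $i$. The in-neighbor set of $i$ is $\mathcal V_i=\{j:(j,i)\in\mathcal E\}$, and $\mathcal J_i=\mathcal V_i\cup\{i\}$. - A nonempty $S\subset\mathcal V$ is $r$-reachable if some $i\in S$ has $|\mathcal V_i\setminus S|\ge r$. - $\mathcal D$ is $r$-robust if for every pair of nonempty disjoint subsets of $\mathcal V$, at least one of them is $r$-reachable. Dynamics and communication. Each agent has a scalar state with $\dot x_i(t)=u_i(t)$. Fix a strictly increasing $g:\mathbb R\to\mathbb R$ (not necessarily continuous). At time $t$, agent $i$ receives from each in-neighbor $j$ a value $g(x^i_j(t))$. The agents are partitioned into normal agents $\mathcal N$ and misbehaving agents $\mathcal A$. -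 A normal agent $j$ sends $g(x_j(t))$ to all its out-neighbors, so $x^i_j=x_j$, and updates via the FTRC protocol. - Misbehaving agents may use arbitrary inputs and may send arbitrary, possibly different, values to different out-neighbors. The only restriction is that $t\mapsto g(x^i_k(t))$ is Lebesgue measurable for all $k\in\mathcal A$ and $i\in\mathcal N$. - $\mathcal A$ is $F$-local if $|\mathcal V_i\cap\mathcal A|\le F$ for every $i\in\mathcal V\setminus\mathcal A$. FTRC protocol for a normal agent $i$ at time $t$: 1. Sort the received values $g(x^i_j(t))$, $j\in\mathcal V_i$. 2. If fewer than $F$ values are strictly larger than $g(x_i(t))$, remove all values strictly larger than $g(x_i(t))$; otherwise remove exactly the $F$ largest values. 3. Likewise, if fewer than $F$ values are strictly smaller than $g(x_i(t))$, remove all values strictly smaller; otherwise remove exactly the $F$ smallest values. 4. With $\mathcal R_i(t)$ the set of agents whose values were removed, set $u_i(t)=\alpha\,\mathrm{sign}\big(\sum_{j\in\mathcal J_i\setminus\mathcal R_i(t)}(g(x^i_j(t))-g(x_i(t)))\big)$, where $x^i_i=x_i$ and $\mathrm{sign}(0)=0$. Trajectories. Write $x_{\mathcal N}=(x_{\mathcal N_1},\dots,x_{\mathcal N_{|\mathcal N|}})^T$ for a fixed ordering of $\mathcal N$. A trajectory of the normal agents on an interval $I\ni0$ is an absolutely continuous $x_{\mathcal N}:I\to\mathbb R^{|\mathcal N|}$ with $\dot x_{\mathcal N_k}(t)=u_{\mathcal N_k}(t)$ for all $k$ and almost every $t\in I$. Here $\mathbf 1$ is the all-ones vector. *)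

From HB Require Import structures.
From mathcomp Require Import all_boot all_order all_algebra.
From mathcomp Require Import all_classical all_reals all_analysis.
Set Implicit Arguments. Unset Strict Implicit. Unset Printing Implicit Defensive.
Import Order.TTheory GRing.Theory Num.Theory.
Import numFieldNormedType.Exports.

Local Open Scope ring_scope.

(* Digraph on agents 'I_n given by an edge relation E : rel 'I_n;
   E i j  means (i,j) is an edge: agent j receives information from agent i. *)

Definition in_nbrs (n : nat) (E : rel 'I_n) (i : 'I_n) : {set 'I_n} :=
  [set j | E j i].

Definition closed_nbrs (n : nat) (E : rel 'I_n) (i : 'I_n) : {set 'I_n} :=
  i |: in_nbrs E i.

Definition r_reachable (n : nat) (E : rel 'I_n) (S : {set 'I_n}) (r : nat) :
  Prop := exists2 i, i \in S & (r <= #|in_nbrs E i :\: S|)%N.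

Definition r_robust (n : nat) (E : rel 'I_n) (r : nat) : Prop :=
  forall S1 S2 : {set 'I_n}, S1 != finset.set0 -> S2 != finset.set0 -> [disjoint S1 & S2] ->
    r_reachable E S1 r \/ r_reachable E S2 r.

Definition F_local (n : nat) (E : rel 'I_n) (A : {set 'I_n}) (F : nat) : Prop :=
  forall i, i \notin A -> (#|in_nbrs E i :&: A| <= F)%N.

(* State value x^i_j(t) that normal agent i receives (through g) from j at
   time t: the true state x_j(t) if j is normal, and the arbitrary value
   y i j t if j is misbehaving. *)
Definition recv (R : realType) (n : nat) (A : {set 'I_n})
  (x : R -> 'I_n -> R) (y : 'I_n -> 'I_n -> R -> R) (i j : 'I_n) (t : R) : R :=
  if j \in A then y i j t else x t j.

(* Ties among the
   F largest (smallest) values may be broken arbitrarily; the resulting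
   sum does not depend on the choice. *)
Definition ftrc_removal (R : realType) (n : nat) (E : rel 'I_n) (F : nat)
  (i : 'I_n) (w : 'I_n -> R) (c : R) (Rl Rs : {set 'I_n}) : Prop :=
  let Lg := [set j in in_nbrs E i | c < w j] in
  let Sm := [set j in in_nbrs E i | w j < c] in
  [/\ Rl \subset Lg, #|Rl| = minn F #|Lg| &
      (forall j k, j \in Rl -> k \in Lg :\: Rl -> w k <= w j)] /\
  [/\ Rs \subset Sm, #|Rs| = minn F #|Sm| &
      (forall j k, j \in Rs -> k \in Sm :\: Rs -> w j <= w k)].

Definition ftrc_input (R : realType) (n : nat) (E : rel 'I_n) (A : {set 'I_n})
  (F : nat) (alpha : R) (g : R -> R) (x : R -> 'I_n -> R)
  (y : 'I_n -> 'I_n -> R -> R) (i : 'I_n) (t : R) (v : R) : Prop :=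
  let w := fun j => g (recv A x y i j t) in
  let c := g (x t i) in
  exists Rl Rs, ftrc_removal E F i w c Rl Rs /\
    v = alpha * Num.sg (\sum_(j in closed_nbrs E i :\: (Rl :|: Rs)) (w j - c)).

Definition abs_cont_on (R : realType) (a b : R) (f : R -> R) : Prop :=
  forall e : R, 0 < e -> exists2 d : R, 0 < d &
    forall (k : nat) (s s' : 'I_k -> R),
      (forall l, [/\ a <= s l, s l <= s' l & s' l <= b]) ->
      (forall l m, l != m -> s' l <= s m \/ s' m <= s l) ->
      \sum_(l < k) (s' l - s l) < d ->
      \sum_(l < k) `|f (s' l) - f (s l)| < e.

Definition Ival (R : realType) (t1 : \bar R) : set R :=
  fun t => 0 <= t /\ (t%:E < t1)%E.

Definition abs_cont_Ival (R : realType) (t1 : \bar R) (f : R -> R) : Prop :=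
  forall b : R, Ival t1 b -> abs_cont_on 0 b f.

Definition trajectory (R : realType) (n : nat) (E : rel 'I_n) (A : {set 'I_n})
  (F : nat) (alpha : R) (g : R -> R) (y : 'I_n -> 'I_n -> R -> R)
  (t1 : \bar R) (x : R -> 'I_n -> R) : Prop :=
  (forall i, i \notin A -> abs_cont_Ival t1 (fun s => x s i)) /\
  {ae (@lebesgue_measure R), forall t, Ival t1 t ->
     forall i, i \notin A ->
       derivable (fun s => x s i) t 1 /\
       ftrc_input E A F alpha g x y i t ('D_1 (fun s => x s i) t)}.

(* V(z) = max_k z_k - min_k z_k over the normal agents (0 if none) *)
Definition Vspread (R : realType) (n : nat) (N : {set 'I_n}) (z : 'I_n -> R) : R :=
  let s := [seq z i | i in N] in
  \big[Num.max/head 0 s]_(v <- s) v - \big[Num.min/head 0 s]_(v <- s) v.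

Definition in_span1 (R : realType) (n : nat) (N : {set 'I_n}) (z : 'I_n -> R) : Prop :=
  exists c : R, forall i, i \in N -> z i = c.

(* Lebesgue measurable subsets of R: those differing from a Borel set by a
   Lebesgue-negligible set (i.e. measurable for the completed measure). *)
Definition leb_measurable_set (R : realType) (S : set R) : Prop :=
  exists2 B : set R, measurable B &
    (@lebesgue_measure R).-negligible (setU (setD S B) (setD B S)).

Definition leb_measurable_fun (R : realType) (f : R -> R) : Prop :=
  forall B : set R, measurable B -> leb_measurable_set (preimage f B).

From HB Require Import structures.
From mathcomp Require Import all_boot all_order all_algebra.
From mathcomp Require Import all_classical all_reals all_analysis.
From mathcomp Require Import lra zify.
Import Order.TTheory GRing.Theory Num.Theory.
Import numFieldNormedType.Exports.
Local Open Scope ring_scope.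

(* At almost every time all normal states are differentiable and any two normal
   agents with equal states have equal velocities: where two differentiable
   functions meet with different slopes they meet at an isolated point, and a set
   of isolated points of R is countable.  At such a time V = max - min is
   differentiable, with derivative u_k - u_j for any maximal normal agent k and
   any minimal normal agent j.  Since at most F in-neighbours of a normal agent
   misbehave and FTRC discards the F most extreme values on each side, a maximal
   agent never moves up and a minimal one never moves down.  Off span(1) the sets
   of maximal and of minimal normal agents are nonempty and disjoint, so by
   (2F+1)-robustness one of them contains an agent with 2F+1 in-neighbours
   outside it; at least F+1 of those are normal and strictly on the inner side,
   so they are not all discarded and that agent moves inwards at speed alpha. *)

Section IsolatedPoints.
Context {R : realType}.
Local Open Scope classical_set_scope.
Local Open Scope ring_scope.

Lemma countable_isolated (B : set R) :
  (forall t, B t -> exists2 e : R, 0 < e & forall s, B s -> `|s - t| < e -> s = t) ->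
  countable B.
Proof.
move=> isoB.
pose sep t (pq : rat * rat) := ratr pq.1 < t < ratr pq.2 /\
  forall s, B s -> ratr pq.1 < s < ratr pq.2 -> s = t.
have sepB t : B t -> exists pq, sep t pq.
  move=> /isoB[e e0 iso_t].
  have [p /andP[p1 p2]] : exists p : rat, ratr p \in `]t - e, t[.
    by apply: rat_in_itvoo; lra.
  have [q /andP[q1 q2]] : exists q : rat, ratr q \in `]t, t + e[.
    by apply: rat_in_itvoo; lra.
  rewrite !bnd_simp in p1 p2 q1 q2.
  exists (p, q); split => /=; first by rewrite p2 q1.
  move=> s Bs /andP[ps sq]; apply: iso_t => //; rewrite ltr_norml; apply/andP; split; lra.
apply/countable_injP; exists (fun t => pickle (xget (0, 0) (sep t))).
move=> t t' /[!inE] Bt Bt' /(pcan_inj (@pickleK _)) sep_tt'.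
have [_ sep_t] := xgetPex (0, 0) (sepB t Bt).
have [t'_in _] := xgetPex (0, 0) (sepB t' Bt').
by rewrite -sep_tt' in t'_in; symmetry; apply: sep_t.
Qed.

Lemma derivable_isolated_root (d : R -> R) t :
  derivable d t 1 -> d t = 0 -> 'D_1 d t != 0 ->
  exists2 e : R, 0 < e & forall s, `|s - t| < e -> d s = 0 -> s = t.
Proof.
move=> dd dt0 Dd0.
have : (fun h : R => h^-1 *: ((d \o shift t) (h *: 1) - d t)) @ 0^' --> 'D_1 d t := dd.
move/cvgrPdist_lt => /(_ `|'D_1 d t|); rewrite normr_gt0 => /(_ Dd0).
rewrite near_withinE /= => /nbhs_normP[e e0 near_t].
exists e => // s st ds0; apply/eqP; apply/negPn/negP => neq_st.
have := near_t (s - t); rewrite /= sub0r normrN => /(_ st); rewrite subr_eq0 => /(_ neq_st).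
by rewrite /shift /= scaler1 subrK ds0 dt0 subr0 scaler0 subr0 ltxx.
Qed.

(* Where f - g vanishes with nonzero slope its zero is isolated, so the
   exceptional set is countable. *)
Lemma ae_eq_derive (f g : R -> R) :
  {ae (@lebesgue_measure R), forall t, derivable f t 1 -> derivable g t 1 ->
     f t = g t -> 'D_1 f t = 'D_1 g t}.
Proof.
set B := [set t | [/\ derivable f t 1, derivable g t 1, f t = g t & 'D_1 f t != 'D_1 g t]].
have isoB t : B t -> exists2 e : R, 0 < e & forall s, B s -> `|s - t| < e -> s = t.
  case=> df dg fg Dfg.
  have [|||e e0 iso_t] := @derivable_isolated_root (f \- g) t.
  - exact: derivableB.
  - by rewrite /= fg subrr.
  - by rewrite deriveB // subr_eq0.
  by exists e => // s [_ _ fgs _] st; apply: iso_t => //=; rewrite fgs subrr.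
exists B; split.
- by apply: countable_measurable; [exact: measurable_set1 | exact: countable_isolated].
- by apply: countable_lebesgue_measure0; exact: countable_isolated.
- move=> t /=; apply: contra_notP => notB df dg fg.
  by apply: contra_notP notB => /eqP Dfg.
Qed.

Definition equal_slopes {I : finType} (N : {set I}) (x : R -> I -> R) (t : R) :=
  forall i j, i \in N -> j \in N -> x t i = x t j -> 'D_1 (x^~ i) t = 'D_1 (x^~ j) t.

Lemma ae_equal_slopes {I : finType} (N : {set I}) (x : R -> I -> R) :
  {ae (@lebesgue_measure R), forall t,
     (forall i, i \in N -> derivable (x^~ i) t 1) -> equal_slopes N x t}.
Proof.
have pairs_ae : {ae (@lebesgue_measure R), forall t, forall i j : I,
    derivable (x^~ i) t 1 -> derivable (x^~ j) t 1 ->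
    x t i = x t j -> 'D_1 (x^~ i) t = 'D_1 (x^~ j) t}.
  by do 2 apply: (filter_forall (ae_filter_ringOfSetsType _)) => ?; exact: ae_eq_derive.
apply: (filterS (F := almost_everywhere (@lebesgue_measure R))) pairs_ae.
by move=> t pairs_t dx i j iN jN; apply: pairs_t; apply: dx.
Qed.

End IsolatedPoints.

Section DerivativeOfMax.
Context {R : realType}.
Local Open Scope classical_set_scope.
Local Open Scope ring_scope.

Lemma derivable_flat (e : R -> R) t : e t = 0 ->
  (forall eps, 0 < eps -> \forall u \near 0^', `|e (u + t)| <= eps * `|u|) ->
  derivable e t 1 /\ 'D_1 e t = 0.
Proof.
move=> et0 flat.
have quot0 : (fun u : R => u^-1 *: ((e \o shift t) (u *: 1) - e t)) @ 0^' --> 0.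
  apply/cvgrPdist_le => eps eps0; move: (flat _ eps0); apply: filter_app; near=> u => eu.
  rewrite /shift /= scaler1 et0 subr0 sub0r normrN normrZ normfV.
  have [->|u0] := eqVneq u 0; first by rewrite normr0 invr0 mul0r ltW.
  by rewrite mulrC ler_pdivrMr ?normr_gt0.
by split; [apply/cvg_ex; exists 0 | apply: cvg_lim].
Unshelve. all: by end_near.
Qed.

Lemma near_below_slope (g : R -> R) t eps : 0 < eps -> derivable g t 1 ->
  g t < 0 \/ g t = 0 /\ 'D_1 g t = 0 ->
  \forall u \near 0^', g (u + t) <= eps * `|u|.
Proof.
move=> eps0 dg [gt0|[gt0 Dg0]].
  have : g @ t --> g t by apply: differentiable_continuous; apply/derivable1_diffP.
  move/cvgr_lt => /(_ 0 gt0) /nbhs_normP[d d0 near_t].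
  rewrite near_withinE; apply/nbhs_normP; exists d => // u /= ud _.
  have := near_t (u + t); rewrite /= distrC addrK.
  move: ud; rewrite distrC subr0 => ud /(_ ud) /ltW gut_le0.
  by apply: le_trans gut_le0 _; exact: mulr_ge0 (ltW eps0) (normr_ge0 _).
have : (fun u : R => u^-1 *: ((g \o shift t) (u *: 1) - g t)) @ 0^' --> 'D_1 g t := dg.
move/cvgrPdist_le => /(_ eps eps0); apply: filter_app; near=> u => quot_u.
have [->|u0] := eqVneq u 0; first by rewrite add0r gt0 normr0 mulr0.
move: quot_u; rewrite Dg0 sub0r normrN /shift /= scaler1 gt0 subr0.
rewrite normrZ normfV ler_pdivrMl ?normr_gt0 // => gu_le.
by apply: le_trans (ler_norm _) _; rewrite mulrC.
Unshelve. all: by end_near.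
Qed.

Lemma derivable_eq_opp (f g : R -> R) t : (forall s, f s = - g s) ->
  derivable g t 1 -> derivable f t 1 /\ 'D_1 f t = - 'D_1 g t.
Proof.
move=> fg dg; have -> : f = - g by apply/funext => s; rewrite fg.
by split; [exact: derivableN | exact: deriveN].
Qed.

Lemma derivable_max {I : finType} (f : R -> R) (h : I -> R -> R) (N : {set I}) k t :
  k \in N -> f t = h k t ->
  (forall s, exists2 i, i \in N & f s = h i s) ->
  (forall s i, i \in N -> h i s <= f s) ->
  (forall i, i \in N -> derivable (h i) t 1) ->
  (forall i, i \in N -> h i t = h k t -> 'D_1 (h i) t = 'D_1 (h k) t) ->
  derivable f t 1 /\ 'D_1 f t = 'D_1 (h k) t.
Proof.
move=> kN fk f_attained f_ub dh Dh.
have below i : i \in N -> forall eps, 0 < eps ->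
    \forall u \near 0^', (h i \- h k) (u + t) <= eps * `|u|.
  move=> iN eps eps0; apply: (near_below_slope (h i \- h k)) => //.
    by apply: derivableB; apply: dh.
  have := f_ub t i iN; rewrite fk le_eqVlt => /orP[/eqP hik|]; last by left; rewrite subr_lt0.
  right; split; first by rewrite /= hik subrr.
  by rewrite deriveB ?Dh ?subrr //; apply: dh.
have [de De] : derivable (f \- h k) t 1 /\ 'D_1 (f \- h k) t = 0.
  apply: derivable_flat => [|eps eps0]; first by rewrite /= fk subrr.
  have : \forall u \near 0^', forall i, i \in N ->
      (h i \- h k) (u + t) <= eps * `|u|.
    apply: filter_forall => i; have [iN|_] := boolP (i \in N); last exact: nearW.
    by move: (below i iN eps eps0); apply: filterS => u ? _.
  apply: filterS => u below_u.
  have [i iN fi] := f_attained (u + t).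
  by rewrite /= ger0_norm ?subr_ge0 ?(f_ub _ k) // fi; exact: below_u.
have -> : f = (f \- h k) \+ h k by apply/funext => s /=; rewrite subrK.
have dhk := dh k kN.
by rewrite deriveD // De add0r; split => //; exact: derivableD.
Qed.

End DerivativeOfMax.

Section Spread.
Context {R : realType}.

Definition vmax {I : finType} (N : {set I}) (z : I -> R) : R :=
  let s := [seq z i | i in N] in \big[Num.max/head 0 s]_(v <- s) v.

Definition vmin {I : finType} (N : {set I}) (z : I -> R) : R :=
  let s := [seq z i | i in N] in \big[Num.min/head 0 s]_(v <- s) v.

Lemma VspreadE n (N : {set 'I_n}) (z : 'I_n -> R) : Vspread N z = vmax N z - vmin N z.
Proof. by []. Qed.

Lemma big_head_mem (op : R -> R -> R) (s : seq R) :
  (forall a b, op a b = a \/ op a b = b) -> s != [::] ->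
  \big[op/head 0 s]_(v <- s) v \in s.
Proof.
move=> opE s0; rewrite big_seq; apply: (big_ind (fun v => v \in s)) => //.
- by case: s s0 => // a s _; rewrite mem_head.
- by move=> a b; case: (opE a b) => ->.
Qed.

Lemma image_neq_nil {I : finType} (N : {set I}) (z : I -> R) :
  N != finset.set0 -> [seq z i | i in N] != [::].
Proof.
case/set0Pn => i iN; have : z i \in [seq z i | i in N] by rewrite map_f ?mem_enum.
by apply: contraTneq => ->.
Qed.

Lemma vmax_attained {I : finType} (N : {set I}) (z : I -> R) :
  N != finset.set0 -> exists2 i, i \in N & vmax N z = z i.
Proof.
move=> /(@image_neq_nil _ _ z) /(big_head_mem Num.max) /mapP[| i].
  by move=> a b; rewrite /Num.max; case: ifP; [right | left].
by rewrite mem_enum; exists i.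
Qed.

Lemma vmin_attained {I : finType} (N : {set I}) (z : I -> R) :
  N != finset.set0 -> exists2 i, i \in N & vmin N z = z i.
Proof.
move=> /(@image_neq_nil _ _ z) /(big_head_mem Num.min) /mapP[| i].
  by move=> a b; rewrite /Num.min; case: ifP; [left | right].
by rewrite mem_enum; exists i.
Qed.

Lemma vmax_ub {I : finType} {N : {set I}} (z : I -> R) {i} : i \in N -> z i <= vmax N z.
Proof. by move=> iN; apply: le_bigmax_seq; rewrite ?map_f ?mem_enum. Qed.

Lemma vmin_lb {I : finType} {N : {set I}} (z : I -> R) {i} : i \in N -> vmin N z <= z i.
Proof. by move=> iN; apply: ge_bigmin_seq; rewrite ?map_f ?mem_enum. Qed.

Lemma Vspread_set0 n (z : 'I_n -> R) : Vspread finset.set0 z = 0.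
Proof.
rewrite VspreadE /vmax /vmin.
have -> : [seq z i | i in (finset.set0 : {set 'I_n})] = [::].
  by apply/nilP; rewrite /nilp size_map -cardE cards0.
by rewrite !big_nil subrr.
Qed.

Lemma derivable_vmax {I : finType} {N : {set I}} {x : R -> I -> R} {k t} :
  k \in N -> x t k = vmax N (x t) ->
  (forall i, i \in N -> derivable (x^~ i) t 1) -> equal_slopes N x t ->
  derivable (fun s => vmax N (x s)) t 1 /\
  'D_1 (fun s => vmax N (x s)) t = 'D_1 (x^~ k) t.
Proof.
move=> kN xk dx Dx; have N0 : N != finset.set0 by apply/set0Pn; exists k.
apply: (@derivable_max _ _ _ (fun i s => x s i) _ _ _ kN (esym xk))
  => [s|s i iN|i iN|i iN xik].
- by have [i iN ->] := vmax_attained _ (x s) N0; exists i.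
- exact: vmax_ub.
- exact: dx.
- exact: Dx i k iN kN xik.
Qed.

Lemma derivable_vmin {I : finType} {N : {set I}} {x : R -> I -> R} {k t} :
  k \in N -> x t k = vmin N (x t) ->
  (forall i, i \in N -> derivable (x^~ i) t 1) -> equal_slopes N x t ->
  derivable (fun s => vmin N (x s)) t 1 /\
  'D_1 (fun s => vmin N (x s)) t = 'D_1 (x^~ k) t.
Proof.
move=> kN xk dx Dx; have N0 : N != finset.set0 by apply/set0Pn; exists k.
have [dm Dm] : derivable (- (fun s => vmin N (x s))) t 1 /\
    'D_1 (- (fun s => vmin N (x s))) t = 'D_1 (- x^~ k) t.
  apply: (@derivable_max _ _ _ (fun i => - x^~ i) _ _ _ kN)
    => [|s|s i iN|i iN|i iN xik].
  - by rewrite !opprfctE /= xk.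
  - by have [i iN xi] := vmin_attained _ (x s) N0; exists i => //; rewrite !opprfctE /= xi.
  - by rewrite !opprfctE /= lerN2 vmin_lb.
  - exact/derivableN/dx.
  - rewrite !deriveN; [|by apply: dx..].
    by apply: congr1; exact: Dx i k iN kN (oppr_inj xik).
have [dv ->] := @derivable_eq_opp _ (fun s => vmin N (x s)) _ t (fun s => esym (opprK _)) dm.
by split=> //; rewrite Dm deriveN ?opprK //; exact: dx.
Qed.

Lemma derivable_spread {n} {N : {set 'I_n}} {x : R -> 'I_n -> R} {t} :
  (forall i, i \in N -> derivable (x^~ i) t 1) -> equal_slopes N x t ->
  derivable (fun s => Vspread N (x s)) t 1 /\
  forall k j, k \in N -> j \in N -> x t k = vmax N (x t) -> x t j = vmin N (x t) ->
    'D_1 (fun s => Vspread N (x s)) t = 'D_1 (x^~ k) t - 'D_1 (x^~ j) t.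
Proof.
move=> dx Dx; have [->|N0] := eqVneq N finset.set0.
  have -> : (fun s => Vspread finset.set0 (x s)) = cst 0.
    by apply/funext => s; rewrite Vspread_set0.
  by split=> [|k j]; [exact: derivable_cst | rewrite inE].
have VE : (fun s => Vspread N (x s)) =
    (fun s => vmax N (x s)) - (fun s => vmin N (x s)) by [].
have [k kN /esym xk] := vmax_attained _ (x t) N0.
have [j jN /esym xj] := vmin_attained _ (x t) N0.
have [dM _] := derivable_vmax kN xk dx Dx; have [dm _] := derivable_vmin jN xj dx Dx.
rewrite VE; split=> [|k' j' k'N j'N xk' xj']; first exact: derivableB.
have [_ Dmax] := derivable_vmax k'N xk' dx Dx; have [_ Dmin] := derivable_vmin j'N xj' dx Dx.
by rewrite deriveB // Dmax Dmin.
Qed.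

Lemma vmin_lt_vmax {n} {N : {set 'I_n}} {z : 'I_n -> R} :
  ~ in_span1 N z -> vmin N z < vmax N z.
Proof.
move=> nspan; have [N0|/(vmax_attained _ z)[k kN _]] := eqVneq N finset.set0.
  by exfalso; apply: nspan; exists 0 => i; rewrite N0 inE.
rewrite lt_neqAle (le_trans (vmin_lb z kN) (vmax_ub z kN)) andbT.
apply: contra_not_neq nspan => min_max; exists (vmax N z) => i iN.
by apply/eqP; rewrite eq_le vmax_ub // -min_max vmin_lb.
Qed.

End Spread.

Section Trimming.
Context {R : realType} {n : nat} {E : rel 'I_n} {F : nat} {i : 'I_n}.

Lemma ftrc_removalN {w w' : 'I_n -> R} {c c' Rl Rs} :
  (forall j, w' j = - w j) -> c' = - c ->
  ftrc_removal E F i w c Rl Rs -> ftrc_removal E F i w' c' Rs Rl.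
Proof.
move=> w'E ->.
have largeN : [set j in in_nbrs E i | - c < w' j] = [set j in in_nbrs E i | w j < c].
  by apply/setP => j; rewrite !inE w'E ltrN2.
have smallN : [set j in in_nbrs E i | w' j < - c] = [set j in in_nbrs E i | c < w j].
  by apply/setP => j; rewrite !inE w'E ltrN2.
rewrite /ftrc_removal /= largeN smallN => -[[lRl cRl oRl] [sRs cRs oRs]].
by split; split=> // j k jR kS; rewrite !w'E lerN2; [apply: oRs | apply: oRl].
Qed.

Lemma ftrc_kept_le {w : 'I_n -> R} {c Rl Rs} {B : {set 'I_n}} {j} :
  ftrc_removal E F i w c Rl Rs ->
  (#|in_nbrs E i :&: B| <= F)%N ->
  (forall k, k \in in_nbrs E i -> k \notin B -> w k <= c) -> w i <= c ->
  j \in closed_nbrs E i :\: (Rl :|: Rs) -> w j <= c.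
Proof.
set Lg := [set k in in_nbrs E i | c < w k].
move=> [[RlLg cRl _] _] cB wB wi.
have LgB : Lg \subset in_nbrs E i :&: B.
  apply/fintype.subsetP => k; rewrite !inE => /andP[kV ck]; rewrite kV /=.
  by apply: contraTT ck => kB; rewrite -leNgt wB ?inE.
have RlE : Rl = Lg.
  apply/eqP; rewrite eqEcard RlLg cRl leq_min leqnn andbT.
  exact: leq_trans (subset_leq_card LgB) cB.
rewrite !inE RlE !inE => /andP[/norP[jLg _] /orP[/eqP -> //|jV]].
by move: jLg; rewrite jV -leNgt.
Qed.

Lemma ftrc_kept_lt {w : 'I_n -> R} {c Rl Rs} :
  ftrc_removal E F i w c Rl Rs ->
  (F < #|[set k in in_nbrs E i | (w k < c)%R]|)%N ->
  exists2 j, j \in closed_nbrs E i :\: (Rl :|: Rs) & w j < c.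
Proof.
set Sm := [set k in in_nbrs E i | w k < c].
move=> [[RlLg _ _] [RsSm cRs _]] manySm.
have /subsetPn[j jSm jRs] : ~~ (Sm \subset Rs).
  apply: contraTN manySm => /subset_leq_card SmRs.
  by rewrite -leqNgt (leq_trans SmRs) // cRs geq_minl.
move: jSm; rewrite inE => /andP[jV wj]; exists j => //.
have jRl : j \notin Rl.
  by apply: contraTN wj => /(fintype.subsetP RlLg); rewrite inE => /andP[_ /ltW]; rewrite -leNgt.
by move: jV; rewrite !inE negb_or jRl jRs => ->; rewrite orbT.
Qed.

End Trimming.

Definition level_set {R : realType} {n} (A : {set 'I_n}) (z : 'I_n -> R) (c : R) :=
  [set j | (j \notin A) && (z j == c)].

Lemma card_normal_outside {n} {E : rel 'I_n} {A S : {set 'I_n}} {F i} :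
  (#|in_nbrs E i :&: A| <= F)%N -> (2 * F + 1 <= #|in_nbrs E i :\: S|)%N ->
  (F < #|(in_nbrs E i :\: S) :\: A|)%N.
Proof.
move=> cA cS; have := cardsID A (in_nbrs E i :\: S).
have : (#|(in_nbrs E i :\: S) :&: A| <= F)%N.
  by apply/(leq_trans _ cA)/subset_leq_card/finset.setSI/finset.subsetDl.
lia.
Qed.

Section Agents.
Context {R : realType} {n : nat} {E : rel 'I_n} {A : {set 'I_n}} {F : nat} {alpha : R}.

(* Reflecting states and values through 0 swaps the roles of the large and the
   small values discarded by FTRC. *)
Lemma ftrc_inputN {g : R -> R} {y x i t v} :
  ftrc_input E A F alpha g x y i t v ->
  ftrc_input E A F alpha (fun a => - g (- a)) (fun s j => - x s j)
    (fun i j s => - y i j s) i t (- v).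
Proof.
have recvN j : recv A (fun s j => - x s j) (fun i j s => - y i j s) i j t = - recv A x y i j t.
  by rewrite /recv; case: ifP.
move=> [Rl [Rs [rem ->]]]; exists Rs, Rl; split.
  by apply: ftrc_removalN rem => [j|]; rewrite ?recvN opprK.
rewrite finset.setUC -mulrN -sgrN -sumrN; congr (_ * Num.sg _); apply: eq_bigr => j _.
by rewrite recvN !opprK opprB addrC.
Qed.

Hypotheses (alpha_gt0 : 0 < alpha) (A_local : F_local E A F).

Lemma ftrc_input_at_max {g : R -> R} {y x i t v} : {homo g : a b / a < b} ->
  i \notin A -> (forall j, j \notin A -> x t j <= x t i) ->
  ftrc_input E A F alpha g x y i t v ->
  v <= 0 /\ ((2 * F + 1 <= #|in_nbrs E i :\: level_set A (x t) (x t i)|)%N -> v = - alpha).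
Proof.
move=> g_incr iA xi_max [Rl [Rs [rem ->]]].
have g_le a b : a <= b -> g a <= g b by rewrite le_eqVlt => /orP[/eqP ->|/g_incr/ltW].
have recv_normal j : j \notin A -> recv A x y i j t = x t j by rewrite /recv => /negbTE ->.
have kept_le j : j \in closed_nbrs E i :\: (Rl :|: Rs) ->
    g (recv A x y i j t) - g (x t i) <= 0.
  rewrite subr_le0; apply: (ftrc_kept_le rem (A_local _ iA)); last by rewrite recv_normal.
  by move=> k _ kA; rewrite recv_normal //; apply/g_le/xi_max.
split; first by rewrite pmulr_rle0 // sgr_le0; apply: sumr_le0.
move=> /(card_normal_outside (A_local _ iA)) many_lower.
have [j jK wj] : exists2 j, j \in closed_nbrs E i :\: (Rl :|: Rs) &
    g (recv A x y i j t) < g (x t i).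
  apply: (ftrc_kept_lt rem); apply: (leq_trans many_lower); apply/subset_leq_card.
  apply/fintype.subsetP => k; rewrite !inE => /andP[kA /andP[kS kV]]; rewrite kV /=.
  rewrite recv_normal //; apply/g_incr; rewrite lt_neqAle xi_max // andbT.
  by apply: contraNneq kS => ->; rewrite kA eqxx.
rewrite ltr0_sg ?mulrN1 // (bigD1 j) //=.
rewrite -subr_lt0 in wj; rewrite -[X in _ < X](addr0 0) ltr_leD //.
by apply: sumr_le0 => k /andP[kK _]; exact: kept_le.
Qed.

Lemma ftrc_input_at_min {g : R -> R} {y x i t v} : {homo g : a b / a < b} ->
  i \notin A -> (forall j, j \notin A -> x t i <= x t j) ->
  ftrc_input E A F alpha g x y i t v ->
  0 <= v /\ ((2 * F + 1 <= #|in_nbrs E i :\: level_set A (x t) (x t i)|)%N -> v = alpha).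
Proof.
move=> g_incr iA xi_min /ftrc_inputN /ftrc_input_at_max [].
- by move=> a b ab; rewrite ltrN2 g_incr // ltrN2.
- exact: iA.
- by move=> j jA; rewrite lerN2 xi_min.
have -> : level_set A (fun j => - x t j) (- x t i) = level_set A (x t) (x t i).
  by apply/setP => j; rewrite !inE eqr_opp.
by rewrite oppr_le0 => v_ge0 v_alpha; split=> // /v_alpha /oppr_inj.
Qed.

Lemma spread_derive_le {g : R -> R} {y : 'I_n -> 'I_n -> R -> R} {x : R -> 'I_n -> R} {t} :
  {homo g : a b / a < b} -> r_robust E (2 * F + 1) ->
  (forall i, i \notin A ->
     derivable (x^~ i) t 1 /\ ftrc_input E A F alpha g x y i t ('D_1 (x^~ i) t)) ->
  equal_slopes (~: A) x t -> ~ in_span1 (~: A) (x t) ->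
  'D_1 (fun s => Vspread (~: A) (x s)) t <= - alpha.
Proof.
move=> g_incr robust traj slopes nspan.
have dx i : i \in ~: A -> derivable (x^~ i) t 1 by rewrite inE => /traj[].
have [_ DV] := derivable_spread dx slopes.
have N0 : ~: A != finset.set0.
  by apply: contra_not_neq nspan => ->; exists 0 => i; rewrite inE.
have min_lt_max := vmin_lt_vmax nspan.
have is_max i : x t i = vmax (~: A) (x t) -> forall l, l \notin A -> x t l <= x t i.
  by move=> -> l lA; apply: vmax_ub; rewrite inE.
have is_min i : x t i = vmin (~: A) (x t) -> forall l, l \notin A -> x t i <= x t l.
  by move=> -> l lA; apply: vmin_lb; rewrite inE.
have [k + /esym xk] := vmax_attained _ (x t) N0; rewrite inE => kA.
have [j + /esym xj] := vmin_attained _ (x t) N0; rewrite inE => jA.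
have [Dk_le0 _] := ftrc_input_at_max g_incr kA (is_max k xk) (traj k kA).2.
have [Dj_ge0 _] := ftrc_input_at_min g_incr jA (is_min j xj) (traj j jA).2.
set top := level_set A (x t) (vmax (~: A) (x t)).
set bot := level_set A (x t) (vmin (~: A) (x t)).
have top0 : top != finset.set0 by apply/set0Pn; exists k; rewrite inE kA xk eqxx.
have bot0 : bot != finset.set0 by apply/set0Pn; exists j; rewrite inE jA xj eqxx.
have top_bot : [disjoint top & bot].
  rewrite disjoint_subset; apply/fintype.subsetP => l; rewrite !inE => /andP[_ /eqP ->].
  by rewrite eq_sym lt_eqF ?andbF.
case: (robust top bot top0 bot0 top_bot) => -[i].
- rewrite inE => /andP[iA /eqP xi]; rewrite /top -xi => reach.
  have [_ Di] := ftrc_input_at_max g_incr iA (is_max i xi) (traj i iA).2.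
  by rewrite (DV i j) ?inE // Di //; lra.
- rewrite inE => /andP[iA /eqP xi]; rewrite /bot -xi => reach.
  have [_ Di] := ftrc_input_at_min g_incr iA (is_min i xi) (traj i iA).2.
  by rewrite (DV k i) ?inE // Di //; lra.
Qed.

End Agents.

Local Open Scope classical_set_scope.
Local Open Scope ring_scope.

Theorem theorem4 (R : realType) (n : nat) (E : rel 'I_n) (A : {set 'I_n})
  (F : nat) (alpha : R) (g : R -> R) (y : 'I_n -> 'I_n -> R -> R)
  (t1 : \bar R) (x : R -> 'I_n -> R) :
  (1 < n)%N ->
  0 < alpha ->
  {homo g : a b / a < b} ->
  (forall k i, k \in A -> i \notin A -> leb_measurable_fun (fun t => g (y i k t))) ->
  F_local E A F ->
  r_robust E (2 * F + 1) ->
  trajectory E A F alpha g y t1 x ->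
  {ae (@lebesgue_measure R), forall t, Ival t1 t ->
     derivable (fun s => Vspread (~: A) (x s)) t 1} /\
  {ae (@lebesgue_measure R), forall t, Ival t1 t ->
     ~ in_span1 (~: A) (x t) ->
     'D_1 (fun s => Vspread (~: A) (x s)) t <= - alpha /\ - alpha < 0}.
Proof.
move=> _ alpha_gt0 g_incr _ A_local robust [_ traj].
have ae := ae_filter_ringOfSetsType (@lebesgue_measure R).
have spread_ae : {ae (@lebesgue_measure R), forall t, Ival t1 t ->
    derivable (fun s => Vspread (~: A) (x s)) t 1 /\
    (~ in_span1 (~: A) (x t) -> 'D_1 (fun s => Vspread (~: A) (x s)) t <= - alpha)}.
  apply: (filterS2 ae _ traj (ae_equal_slopes (~: A) x)) => t traj_t slopes_t /traj_t{}traj_t.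
  have dx i : i \in ~: A -> derivable (x^~ i) t 1 by rewrite inE => /traj_t[].
  split; first exact: (derivable_spread dx (slopes_t dx)).1.
  exact: (spread_derive_le alpha_gt0 A_local g_incr robust traj_t (slopes_t dx)).
split; apply: (filterS (F := almost_everywhere _)) spread_ae => t spread_t /spread_t[//].
by move=> _ Dle /Dle; rewrite oppr_lt0.
Qed.
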